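(* Let $\mathbb{F}$ be a field of characteristic $p$ ($p=0$ or prime) and let $f\in\mathbb{F}[X]$ have degree at least $2$. Suppose $f$ is not a monomial and is not a binomial of the form $aX^{p^{\ell}}+b$ with $a\in\mathbb{F}\setminus\{0\}$, $b\in\mathbb{F}$, $\ell\ge1$ (the latter exclusion only relevant when $p>0$). Then $f^{(k)}$ is not a monomial for any $k\ge1$.
   Context: Iterates: $f^{(0)}=X$, $f^{(k)}=f\circ f^{(k-1)}$. A monomial means a polynomial of the form $cX^m$ with $c\in\mathbb{F}$. *)

From HB Require Import structures.
From mathcomp Require Import all_boot all_order all_algebra.
Set Implicit Arguments. Unset Strict Implicit. Unset Printing Implicit Defensive.
Import GRing.Theory.
Local Open Scope ring_scope.

Definition poly_iter (F : fieldType) (f : {poly F}) (k : nat) : {poly F} :=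
  iter k (fun g => f \Po g) 'X.

(* a monomial is c X^m with c in F (c = 0 allowed) *)
Definition is_monomial (F : fieldType) (g : {poly F}) : Prop :=
  exists (c : F) (m : nat), g = c *: 'X^m.

(* Write f^(k+1) = f^(k) o f = f o f^(k).  If h o g is a monomial and g(0) = 0,
   then g and h are monomials: after factoring the largest powers of X out of g
   and h, the cofactor of h o g has nonzero constant term, so it is a constant.
   Applied to the recentred pairs (f^(k) o (X + f(0)), f - f(0)) and
   (f o (X + s), f^(k) - s) with s = f^(k)(0), this shows that f = a X^j + t with
   t <> 0 and that a (X + s)^j + t is a monomial, i.e. (X + s)^j = X^j - t/a
   with s <> 0.  Differentiating at 0 gives j = 0 in F, so char F = p divides j,
   and the Frobenius map reduces the identity to exponent j/p; hence j is a
   power of p. *)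

From HB Require Import structures.
From mathcomp Require Import all_boot all_order all_algebra.
Set Implicit Arguments. Unset Strict Implicit. Unset Printing Implicit Defensive.
Import GRing.Theory.
Local Open Scope ring_scope.

Section MonomialCompositions.
Variable F : fieldType.
Implicit Types (f q g h : {poly F}) (a c e s t : F).

Lemma poly_Xn_factor (p : {poly F}) : p != 0 -> exists j q, p = 'X^j * q /\ q.[0] != 0.
Proof.
move=> p0; have [j [q q0 Ep]] := multiplicity_XsubC p 0.
exists j, q; split; first by rewrite Ep subr0 mulrC.
by move: q0; rewrite p0.
Qed.

Lemma is_monomial_XnM j q : (size q <= 1)%N -> is_monomial ('X^j * q).
Proof. by move=> sq; exists q`_0, j; rewrite {1}(size1_polyC sq) mulrC mul_polyC. Qed.

Lemma size_XnM_monomial j q c m : q.[0] != 0 -> 'X^j * q = c *: 'X^m -> size q = 1%N.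
Proof.
move=> q0 E; have := congr1 (fun r : {poly F} => r`_j) E.
rewrite /= coefXnM ltnn subnn -horner_coef0 coefZ coefXn.
have [jm | _] := eqVneq j m; last by rewrite mulr0 => /eqP; rewrite (negbTE q0).
rewrite -jm mulr1 in E * => qc; have -> : q = c%:P.
  by apply: (mulfI (monic_neq0 (monicXn F j))); rewrite E mulrC mul_polyC.
by rewrite size_polyC -qc q0.
Qed.

Lemma comp_monomial_factors g h c m : g.[0] = 0 -> (1 < size g)%N -> (1 < size h)%N ->
  h \Po g = c *: 'X^m -> is_monomial g /\ is_monomial h.
Proof.
move=> g0 sg sh E.
have [j [g1 [Eg g10]]] : exists j g1, g = 'X^j * g1 /\ g1.[0] != 0.
  by apply: poly_Xn_factor; rewrite -size_poly_gt0 ltnW.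
have [i [h1 [Eh h10]]] : exists i h1, h = 'X^i * h1 /\ h1.[0] != 0.
  by apply: poly_Xn_factor; rewrite -size_poly_gt0 ltnW.
have cof0 : (g1 ^+ i * (h1 \Po g)).[0] != 0.
  by rewrite hornerM horner_comp g0 horner_exp mulf_neq0 // expf_neq0.
have Ehg : h \Po g = 'X^(j * i) * (g1 ^+ i * (h1 \Po g)).
  by rewrite {1}Eh comp_polyM comp_Xn_poly {1}Eg exprMn -exprM mulrA.
have /eqP := size_XnM_monomial cof0 (etrans (esym Ehg) E).
rewrite size_mul_eq1 => /andP[/eqP sg1i /eqP sh1g].
have sh1 : (size h1 <= 1)%N.
  move: (size_comp_poly h1 g); rewrite sh1g => /esym/eqP.
  by rewrite muln_eq0 -!subn1 !subn_eq0 (leqNgt (size g)) sg orbF.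
have i_gt0 : (0 < i)%N.
  by rewrite lt0n; apply: contraTneq sh => i0; rewrite Eh i0 mul1r -leqNgt.
have sg1 : (size g1 <= 1)%N.
  move: (size_exp g1 i); rewrite sg1i => /esym/eqP.
  by rewrite muln_eq0 (gtn_eqF i_gt0) orbF -subn1 subn_eq0.
by split; [rewrite Eg | rewrite Eh]; apply: is_monomial_XnM.
Qed.

Lemma comp_monomial_shift g h c m : (1 < size g)%N -> (1 < size h)%N ->
  h \Po g = c *: 'X^m ->
  is_monomial (g - (g`_0)%:P) /\ is_monomial (h \Po ('X + (g`_0)%:P)).
Proof.
move=> sg sh E; apply: (comp_monomial_factors (c := c) (m := m)).
- by rewrite hornerD hornerN hornerC horner_coef0 subrr.
- by rewrite size_polyDl // size_polyN (leq_ltn_trans (size_polyC_leq1 _)).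
- by rewrite size_comp_poly2 // size_XaddC.
- by rewrite -comp_polyA comp_polyD comp_polyX comp_polyC subrK.
Qed.

Lemma XaddC_exp_binomial_natr_eq0 d s e : s != 0 -> (1 < d)%N ->
  ('X + s%:P) ^+ d = 'X^d + e%:P -> d%:R = 0 :> F.
Proof.
move=> s0 d1 E; apply/eqP/negPn/negP => dF.
have := congr1 (fun r => r.[0]) (congr1 deriv E).
rewrite /= deriv_exp !derivE !addr0 mul1r !hornerMn hornerXn horner_exp !hornerE.
rewrite -(mulr_natr (s ^+ _)) -(mulr_natr (0 ^+ _)) => /(mulIf dF)/eqP.
by rewrite expr0n eqn0Ngt -ltnS prednK ?(ltnW d1) // d1 expf_eq0 (negbTE s0) andbF.
Qed.

Lemma XaddC_exp_binomial_descent p d s e : p \in [pchar F] ->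
  ('X + s%:P) ^+ (p * d) = 'X^(p * d) + e%:P ->
  ('X + (s ^+ p)%:P) ^+ d = 'X^d + e%:P.
Proof.
move=> pF E.
have pP : p \in [pchar {poly F}] := rmorph_pchar polyC pF.
have Frob : ('X + s%:P) ^+ p = 'X^p + (s ^+ p)%:P.
  rewrite rmorphXn -!(pFrobenius_autE pP) pFrobenius_autD_comm //.
  exact/commr_sym/commr_polyX.
have sXp : (1 < size ('X^p : {poly F}))%N.
  by rewrite size_polyXn ltnS prime_gt0 // (pcharf_prime pF).
apply/eqP; rewrite -subr_eq0 -(comp_poly_eq0 _ sXp) comp_polyB rmorphXn /=.
by rewrite !comp_polyD comp_polyX !comp_polyC comp_Xn_poly -Frob -!exprM E subrr.
Qed.

Lemma XaddC_exp_binomial d s e : s != 0 -> (1 < d)%N ->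
  ('X + s%:P) ^+ d = 'X^d + e%:P ->
  exists p l, [/\ p \in [pchar F], (0 < l)%N & d = (p ^ l)%N].
Proof.
elim/ltn_ind: d s e => d IH s e s0 d1 E.
have dF := XaddC_exp_binomial_natr_eq0 s0 d1 E.
have [p pF] := natf0_pchar (ltnW d1) (introT eqP dF).
have /dvdnP[d' Ed] : (p %| d)%N by rewrite (dvdn_pcharf pF) dF.
rewrite Ed mulnC in E; have E' := XaddC_exp_binomial_descent pF E.
have d'0 : (0 < d')%N by rewrite lt0n; apply: contraTneq d1; rewrite Ed => ->.
have [d'1 | d'1] := leqP d' 1.
  by exists p, 1%N; rewrite Ed (@anti_leq d' 1) ?d'1 // mul1n expn1.
have d'd : (d' < d)%N by rewrite Ed ltn_Pmulr // prime_gt1 // (pcharf_prime pF).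
have [q [l [qF _ Ed']]] := IH d' d'd _ _ (expf_neq0 p s0) d'1 E'.
move: qF; rewrite (pcharf_eq pF) inE => /eqP qp.
by exists p, l.+1; rewrite Ed Ed' qp expnSr.
Qed.

Lemma binomial_comp_XaddC_monomial a t s j : a != 0 -> t != 0 -> (1 < j)%N ->
  is_monomial ((a *: 'X^j + t%:P) \Po ('X + s%:P)) ->
  exists p l, [/\ p \in [pchar F], (0 < l)%N & j = (p ^ l)%N].
Proof.
move=> a0 t0 j1 [b [n]].
rewrite comp_polyD comp_polyZ comp_Xn_poly comp_polyC => E.
have lcj : (('X + s%:P) ^+ j)`_j = 1.
  have := size_exp ('X + s%:P) j; rewrite size_XaddC mul1n.
  by move: (lead_coef_exp ('X + s%:P) j); rewrite lead_coefXaddC expr1n lead_coefE => <- ->.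
have := congr1 (fun r : {poly F} => r`_j) E.
rewrite /= coefD coefZ coefC lcj mulr1 gtn_eqF 1?ltnW // addr0 coefZ coefXn.
have [jn | _] := eqVneq j n; last by rewrite mulr0 => /eqP; rewrite (negbTE a0).
rewrite -jn mulr1 in E * => ba; rewrite -ba in E.
have Es : ('X + s%:P) ^+ j = 'X^j + (- t / a)%:P.
  apply: (scalerI a0); rewrite scalerDr scale_polyC mulrC divfK // polyCN -E.
  by rewrite addrK.
have s0 : s != 0.
  apply: contra_neq t0 => s0; move: E; rewrite s0 addr0 => /eqP.
  by rewrite -subr_eq0 addrC addKr polyC_eq0 => /eqP.
exact: XaddC_exp_binomial s0 j1 Es.
Qed.

Lemma binomial_of_shift_monomial f a j : (2 < size f)%N -> ~ is_monomial f ->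
  f - (f`_0)%:P = a *: 'X^j ->
  [/\ a != 0, f`_0 != 0, (1 < j)%N & f = a *: 'X^j + (f`_0)%:P].
Proof.
move=> sf not_mono Ef.
have Ef' : f = a *: 'X^j + (f`_0)%:P by rewrite -Ef subrK.
have sfa : size f = size (a *: 'X^j).
  by rewrite -Ef size_polyDl // size_polyN (leq_ltn_trans (size_polyC_leq1 _)) // ltnW.
have a0 : a != 0 by apply: contraTneq sf => a0; rewrite sfa a0 scale0r size_poly0.
split=> //; first by apply/eqP => t0; apply: not_mono; exists a, j; rewrite Ef' t0 addr0.
by move: sf; rewrite sfa size_scale // size_polyXn.
Qed.

Lemma poly_iterSr f k : poly_iter f k.+1 = poly_iter f k \Po f.
Proof.
elim: k => [|k IH]; first by rewrite /poly_iter /= comp_polyX comp_polyXr.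
by rewrite -[poly_iter f k.+2]/(f \Po poly_iter f k.+1) {1}IH comp_polyA.
Qed.

Lemma size_poly_iter_gt1 f k : (1 < size f)%N -> (1 < size (poly_iter f k))%N.
Proof.
move=> sf; elim: k => [|k IH]; first by rewrite size_polyX.
rewrite -[poly_iter f k.+1]/(f \Po poly_iter f k) -ltn_predRL size_comp_poly.
by rewrite muln_gt0 !ltn_predRL sf.
Qed.

End MonomialCompositions.

Theorem lemma10 (F : fieldType) (f : {poly F}) :
  (2 < size f)%N ->
  ~ is_monomial f ->
  ~ (exists (p : nat) (a b : F) (l : nat),
        p \in [pchar F] /\ a != 0 /\ (1 <= l)%N /\
        f = a *: 'X^(p ^ l) + b%:P) ->
  forall k : nat, (1 <= k)%N -> ~ is_monomial (poly_iter f k).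
Proof.
move=> sf not_mono not_binom [//|k] _ [c [m E]].
have sf1 : (1 < size f)%N := ltnW sf.
have sg := size_poly_iter_gt1 k sf1.
have [[a [j /(binomial_of_shift_monomial sf not_mono) [a0 t0 j1 Ef]]] _] :=
  comp_monomial_shift sf1 sg (etrans (esym (poly_iterSr f k)) E).
have [_] := comp_monomial_shift sg sf1 E; rewrite [in X in X \Po _]Ef.
move=> /(binomial_comp_XaddC_monomial a0 t0 j1) [p [l [pF l_gt0 Ej]]].
by apply: not_binom; exists p, a, f`_0, l; rewrite -Ej.
Qed.
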